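(* Let $s\geq 3$, let $p,q$ be coprime integers, and let $k\in G_{K_s}(p,q)$ be any element with $M=k^q$ and $L=k^{-p}$. Then $$k^{p-(4s+7)q}=l^{-1}c^{-1}l^{-s}c^{-1}l^{-s}c^{-1}l^{-1}.$$
   Context: Let $R=c\,l\,c\,l^{-1}c^{-1}l^{-s}c^{-1}l^{-1}c\,l\,c\,l^{s-1}$, $M=c$ and $L=c^{-(2s-2)}\,l\,c\,l^{s}\,c\,l^{s}\,c\,l\,c^{-(2s+9)}$. Define $G_{K_s}(p,q)=\langle c,l\mid R,\ M^pL^q\rangle$ (the fundamental group of $p/q$ surgery on the $(-2,3,2s+1)$-pretzel knot). *)

From Stdlib Require Import ZArith.
Open Scope Z_scope.

Record Group := {
  gcar :> Type;
  gmul : gcar -> gcar -> gcar;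
  gone : gcar;
  ginv : gcar -> gcar;
  gmulA : forall x y z, gmul x (gmul y z) = gmul (gmul x y) z;
  gmul1x : forall x, gmul gone x = x;
  gmulx1 : forall x, gmul x gone = x;
  gmulVx : forall x, gmul (ginv x) x = gone;
  gmulxV : forall x, gmul x (ginv x) = gone
}.

Arguments gmul {g}.
Arguments gone {g}.
Arguments ginv {g}.

Definition zpow {G : Group} (x : G) (n : Z) : G :=
  match n with
  | Z0 => gone
  | Zpos m => Pos.iter (gmul x) gone m
  | Zneg m => ginv (Pos.iter (gmul x) gone m)
  end.

Declare Scope group_scope.
Notation "x * y" := (gmul x y) : group_scope.
Notation "x ^ n" := (zpow x n) : group_scope.
Delimit Scope group_scope with g.

(* The relator R, the meridian M and the longitude L of the (-2,3,2s+1)-pretzel knot. *)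
Definition relR {G : Group} (s : Z) (c l : G) : G :=
  (c * l * c * l^(-1) * c^(-1) * l^(-s) * c^(-1) * l^(-1) * c * l * c * l^(s-1))%g.

Definition merM {G : Group} (c l : G) : G := c.

Definition lonL {G : Group} (s : Z) (c l : G) : G :=
  (c^(-(2*s-2)) * l * c * l^s * c * l^s * c * l * c^(-(2*s+9)))%g.

(* (c,l) satisfies the defining relations of G_{K_s}(p,q) = < c, l | R, M^p L^q >. *)
Definition satisfies_GKs {G : Group} (s p q : Z) (c l : G) : Prop :=
  relR s c l = gone /\ ((merM c l)^p * (lonL s c l)^q)%g = gone.

From Stdlib Require Import ZArith Lia.
Open Scope Z_scope.

(* The longitude is a conjugate-like expression
     L = c^-(2s-2) * V * c^-(2s+9),   V = l c l^s c l^s c l,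
   and the claimed right-hand side is exactly V^-1.  If M = c = k^q and
   L = k^-p, then solving for V shows V = k^(q(2s-2) - p + q(2s+9)) =
   k^((4s+7)q - p), hence V^-1 = k^(p - (4s+7)q).  Only the two peripheral
   relations are used. *)

Section GroupFacts.
Variable G : Group.
Implicit Types x y z : G.

Lemma mul_cancel_r x y z : (x * z)%g = (y * z)%g -> x = y.
Proof.
  intro H.
  rewrite <- (gmulx1 G x), <- (gmulx1 G y), <- (gmulxV G z), !gmulA, H.
  reflexivity.
Qed.

Lemma inv_unique x y : (x * y)%g = gone -> x = ginv y.
Proof. intro H. apply (mul_cancel_r _ _ y). rewrite H, gmulVx. reflexivity. Qed.

Lemma inv_mul x y : ginv (x * y)%g = (ginv y * ginv x)%g.
Proof.
  symmetry. apply inv_unique.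
  rewrite <- gmulA, (gmulA _ (ginv x)), gmulVx, gmul1x, gmulVx. reflexivity.
Qed.

End GroupFacts.

Section Powers.
Variable G : Group.
Implicit Types x : G.

Lemma iter_mul_comm x m :
  (Pos.iter (gmul x) gone m * x)%g = (x * Pos.iter (gmul x) gone m)%g.
Proof.
  induction m using Pos.peano_ind.
  - simpl. rewrite gmulx1. reflexivity.
  - rewrite Pos.iter_succ, <- gmulA, IHm. reflexivity.
Qed.

Lemma zpow_succ x n : (x ^ Z.succ n)%g = (x ^ n * x)%g.
Proof.
  destruct n as [|m|m]; simpl.
  - rewrite gmul1x, gmulx1. reflexivity.
  - rewrite Pos.add_1_r, Pos.iter_succ, iter_mul_comm. reflexivity.
  - destruct m as [|m] using Pos.peano_case.
    + simpl. rewrite gmulx1, gmulVx. reflexivity.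
    + assert (Hsub : Z.pos_sub 1 (Pos.succ m) = Z.neg m).
      { rewrite Z.pos_sub_lt by apply Pos.lt_1_succ.
        rewrite <- Pos.add_1_r, Pos.add_sub. reflexivity. }
      rewrite Hsub. simpl.
      rewrite Pos.iter_succ, inv_mul, <- gmulA, gmulVx, gmulx1. reflexivity.
Qed.

Lemma zpow_pred x n : (x ^ Z.pred n)%g = (x ^ n * ginv x)%g.
Proof.
  rewrite <- (Z.succ_pred n) at 2.
  rewrite zpow_succ, <- gmulA, gmulxV, gmulx1. reflexivity.
Qed.

Lemma zpow_add x a b : (x ^ (a + b))%g = (x ^ a * x ^ b)%g.
Proof.
  induction b using Z.peano_ind.
  - rewrite Z.add_0_r. simpl. rewrite gmulx1. reflexivity.
  - rewrite Z.add_succ_r, !zpow_succ, IHb, gmulA. reflexivity.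
  - rewrite Z.add_pred_r, !zpow_pred, IHb, gmulA. reflexivity.
Qed.

Lemma zpow_opp x n : (x ^ (- n))%g = ginv (x ^ n)%g.
Proof.
  apply inv_unique. rewrite <- zpow_add, Z.add_opp_diag_l. reflexivity.
Qed.

Lemma zpow_mul x a n : ((x ^ a) ^ n)%g = (x ^ (a * n))%g.
Proof.
  induction n using Z.peano_ind.
  - rewrite Z.mul_0_r. reflexivity.
  - rewrite zpow_succ, IHn, Z.mul_succ_r, zpow_add. reflexivity.
  - rewrite zpow_pred, IHn, Z.mul_pred_r, <- Z.add_opp_r, zpow_add, zpow_opp.
    reflexivity.
Qed.

Lemma zpow_m1 x : (x ^ (-1))%g = ginv x.
Proof. simpl. rewrite gmulx1. reflexivity. Qed.

Lemma solve_in_cyclic (c k V : G) (q a b n : Z) :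
  c = (k ^ q)%g ->
  (c ^ (- a) * V * c ^ (- b))%g = (k ^ n)%g ->
  V = (k ^ (q * a + n + q * b))%g.
Proof.
  intros Hc HV.
  assert (HV' : V = (c ^ a * k ^ n * c ^ b)%g).
  { rewrite <- HV, !gmulA, <- zpow_add, Z.add_opp_diag_r, gmul1x,
      <- !gmulA, <- zpow_add, Z.add_opp_diag_l, gmulx1.
    reflexivity. }
  rewrite HV', Hc, !zpow_mul, <- !zpow_add. reflexivity.
Qed.

End Powers.

Definition lonCore {G : Group} (s : Z) (c l : G) : G :=
  (l * c * l ^ s * c * l ^ s * c * l)%g.

Lemma lonL_core {G : Group} (s : Z) (c l : G) :
  lonL s c l = (c ^ (- (2*s-2)) * lonCore s c l * c ^ (- (2*s+9)))%g.
Proof. unfold lonL, lonCore. rewrite !gmulA. reflexivity. Qed.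

Lemma lonCore_inv {G : Group} (s : Z) (c l : G) :
  (l^(-1) * c^(-1) * l^(-s) * c^(-1) * l^(-s) * c^(-1) * l^(-1))%g
  = ginv (lonCore s c l).
Proof.
  unfold lonCore. rewrite !zpow_m1, !zpow_opp, !inv_mul, <- !gmulA. reflexivity.
Qed.

Theorem fact3p2 (G : Group) (s p q : Z) (c l k : G) :
  3 <= s -> Z.gcd p q = 1 ->
  satisfies_GKs s p q c l ->
  merM c l = (k ^ q)%g -> lonL s c l = (k ^ (- p))%g ->
  (k ^ (p - (4*s+7)*q))%g =
    (l^(-1) * c^(-1) * l^(-s) * c^(-1) * l^(-s) * c^(-1) * l^(-1))%g.
Proof.
  intros _ _ _ HM HL.
  rewrite lonL_core in HL.
  pose proof (solve_in_cyclic _ c k _ q _ _ _ HM HL) as Hcore.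
  rewrite lonCore_inv, Hcore, <- zpow_opp.
  f_equal. lia.
Qed.
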